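(* Fix $n\in\mathbb N$. The measures $\{\mathbf P^n_x\}_{x\in\mathbb Z_{\ge0}}$ can be coupled on a common probability space, with coordinate processes $(S^x_k)_{k=0}^n$ of law $\mathbf P^n_x$, in such a way that almost surely $|S^{x+1}_k-S^x_k|=1$ for all $x\ge0$ and all $0\le k\le n$. In particular, for all $x,y\ge0$, $\sup_{k\le n}|S^x_k-S^y_k|\le|x-y|$ almost surely.
   Context: $\mathbf P^n_x$ is the uniform probability measure on the finite set of paths $(s_0,\dots,s_n)\in\mathbb Z_{\ge0}^{n+1}$ with $s_0=x$ and $|s_{i+1}-s_i|=1$ for all $i$ (simple symmetric random walk conditioned to stay non-negative up to time $n$). *)

From HB Require Import structures.
From mathcomp Require Import all_boot all_order all_algebra.
Set Implicit Arguments. Unset Strict Implicit. Unset Printing Implicit Defensive.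
Import Order.TTheory GRing.Theory Num.Theory.

(* walks n x : the list of all paths (s_0,...,s_n) in Z_{>=0}^{n+1} with
   s_0 = x and |s_{i+1} - s_i| = 1, each path given as a seq nat of size n+1. *)
Fixpoint walks (n x : nat) : seq (seq nat) :=
  match n with
  | 0 => [:: [:: x]]
  | m.+1 => [seq x :: w | w <- walks m x.+1] ++
            (if x is x'.+1 then [seq x :: w | w <- walks m x'] else [::])
  end.

Definition is_walk (n x : nat) (s : seq nat) : bool :=
  [&& size s == n.+1, head 0 s == x &
      all (fun i => `|nth 0 s i.+1 - nth 0 s i|%N == 1) (iota 0 n)].

Definition walk_law (R : realFieldType) (n x : nat) (s : seq nat) : R :=
  (if s \in walks n x then ((size (walks n x))%:R)^-1 else 0)%R.

From HB Require Import structures.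
From mathcomp Require Import all_boot all_order all_algebra.
From mathcomp Require Import zify.
Import Order.TTheory GRing.Theory Num.Theory.

Set Implicit Arguments.
Unset Strict Implicit.
Unset Printing Implicit Defensive.

(* Build the coupling by induction on the length. A walk of length n+1 from x
   is a first step followed by a walk of length n; the first step goes up with
   probability N_n(x+1) / N_{n+1}(x), where N_n(x) counts the walks of length
   n from x. One uniform variable b drives the first step of all starting
   points at once: x steps up iff b lies below a threshold proportional to
   that probability. As the probability is nonincreasing in x, neighbours x
   and x+1 land on neighbours or swap places, so adjacency propagates along
   the walks. The monotonicity is N_n(x+2) N_{n+1}(x) <= N_n(x+1) N_{n+1}(x+1),
   which follows from concavity and monotonicity of z |-> N_n(z-1) (set to 0
   at z = 0), both preserved by N_{n+1}(x) = N_n(x+1) + N_n(x-1). *)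

Fixpoint nwalks (n x : nat) : nat :=
  match n with
  | 0 => 1
  | m.+1 => nwalks m x.+1 + (if x is x'.+1 then nwalks m x' else 0)
  end.

Lemma size_walks n x : size (walks n x) = nwalks n x.
Proof.
elim: n x => [|n IHn] [|x] //=; by rewrite size_cat !size_map !IHn.
Qed.

Lemma nwalks_gt0 n x : 0 < nwalks n x.
Proof. by elim: n x => [|n IHn] x //=; rewrite addn_gt0 IHn. Qed.

Lemma nwalks_le_exp2 n x : nwalks n x <= 2 ^ n.
Proof.
elim: n x => [|n IHn] x //=; rewrite expnS mul2n -addnn leq_add //.
by case: x.
Qed.

(* The number of walks of length n from z that stay positive. *)
Definition nwalks_shift (n z : nat) : nat :=
  if z is z'.+1 then nwalks n z' else 0.

Lemma nwalks_shiftS n z :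
  nwalks_shift n.+1 z.+1 = nwalks_shift n z.+2 + nwalks_shift n z.
Proof. by case: z. Qed.

Lemma nwalksS n x : nwalks n.+1 x = nwalks n x.+1 + nwalks_shift n x.
Proof. by []. Qed.

Lemma nwalks_shift_nondecr n z : nwalks_shift n z <= nwalks_shift n z.+1.
Proof.
elim: n z => [|n IHn] [|z] //; rewrite !nwalks_shiftS.
by rewrite leq_add ?IHn.
Qed.

Lemma nwalks_shift_concave n z :
  nwalks_shift n z + nwalks_shift n z.+2 <= (nwalks_shift n z.+1).*2.
Proof.
elim: n z => [|n IHn] z; first by case: z => [|[]].
case: z => [|z]; rewrite !nwalks_shiftS; last first.
  by have := IHn z; have := IHn z.+2; lia.
by move: (IHn 1) => /=; lia.
Qed.

Lemma concave_nondecr_mul (f : nat -> nat) :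
  (forall z, f z + f z.+2 <= (f z.+1).*2) -> (forall z, f z <= f z.+1) ->
  forall z, f z * f z.+3 <= f z.+1 * f z.+2.
Proof.
move=> f_concave f_nondecr z.
have := f_concave z; have := f_concave z.+1.
have := f_nondecr z; have := f_nondecr z.+1; have := f_nondecr z.+2.
nia.
Qed.

Lemma nwalks_log_concave n x :
  nwalks n x.+2 * nwalks n.+1 x <= nwalks n x.+1 * nwalks n.+1 x.+1.
Proof.
rewrite !nwalksS -[nwalks n x.+2]/(nwalks_shift n x.+3).
rewrite -[nwalks n x.+1]/(nwalks_shift n x.+2).
have := concave_nondecr_mul (nwalks_shift_concave n) (nwalks_shift_nondecr n) x.
nia.
Qed.

Lemma head_walks n x s : s \in walks n x -> head 0 s = x.
Proof.
case: n => [|n]; first by rewrite inE => /eqP ->.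
case: x => [|x]; rewrite /= mem_cat ?orbF; first by case/mapP=> w _ ->.
by case/orP=> /mapP[w _ ->].
Qed.

Lemma walksS_cons n x s : s \in walks n.+1 x -> s = x :: behead s.
Proof.
case: x => [|x]; rewrite /= mem_cat ?orbF; first by case/mapP=> w _ ->.
by case/orP=> /mapP[w _ ->].
Qed.

Lemma mem_walksS n x s :
  (x :: s \in walks n.+1 x) =
  (s \in walks n x.+1) || (0 < x) && (s \in walks n x.-1).
Proof.
have mem_cons (L : seq (seq nat)) :
    (x :: s \in [seq x :: w | w <- L]) = (s \in L).
  by apply/mapP/idP => [[w ? [->]] | ?] //; exists s.
rewrite /= mem_cat mem_cons.
by case: x mem_cons => [|x] mem_cons; rewrite ?orbF ?mem_cons.
Qed.

Section FirstStep.
Variable n : nat.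

(* A common denominator for all up-probabilities N_n(x+1) / N_{n+1}(x),
   since N_{n+1}(x) <= 2^(n+1). *)
Definition step_range := (2 ^ n.+1)`!.

Definition up_threshold x := step_range %/ nwalks n.+1 x * nwalks n x.+1.

Definition first_step b x := if b < up_threshold x then x.+1 else x.-1.

Lemma step_range_gt0 : 0 < step_range.
Proof. exact: fact_gt0. Qed.

Lemma up_thresholdE x :
  up_threshold x * nwalks n.+1 x = step_range * nwalks n x.+1.
Proof.
rewrite /up_threshold mulnAC divnK //.
by apply: dvdn_fact; rewrite nwalks_gt0 nwalks_le_exp2.
Qed.

Lemma down_thresholdE x :
  (step_range - up_threshold x) * nwalks n.+1 x =
  step_range * nwalks_shift n x.
Proof. by rewrite mulnBl up_thresholdE nwalksS -mulnBr addKn. Qed.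

Lemma up_threshold_le x : up_threshold x <= step_range.
Proof.
rewrite -(leq_pmul2r (nwalks_gt0 n.+1 x)) up_thresholdE leq_mul2l.
by rewrite nwalksS leq_addr orbT.
Qed.

Lemma up_threshold0 : up_threshold 0 = step_range.
Proof.
apply/eqP; rewrite -(eqn_pmul2r (nwalks_gt0 n.+1 0)) up_thresholdE.
by rewrite nwalksS addn0.
Qed.

Lemma up_threshold_nonincr x : up_threshold x.+1 <= up_threshold x.
Proof.
have N_gt0 : 0 < nwalks n.+1 x * nwalks n.+1 x.+1.
  by rewrite muln_gt0 !nwalks_gt0.
rewrite -(leq_pmul2r N_gt0) {1}(mulnC (nwalks n.+1 x)) !mulnA !up_thresholdE.
by rewrite -!mulnA leq_mul2l nwalks_log_concave orbT.
Qed.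

Lemma first_step_adjacent b x : b < step_range ->
  first_step b x.+1 = (first_step b x).+1 \/
  first_step b x.+1 = x /\ first_step b x = x.+1.
Proof.
move=> b_lt; rewrite /first_step.
case: (ltnP b (up_threshold x.+1)) => [b_lt1 | _].
  by left; rewrite (leq_trans b_lt1 (up_threshold_nonincr x)).
case: (ltnP b (up_threshold x)) => [_ | b_ge0]; first by right.
case: x b_ge0 => [|x _]; last by left.
by rewrite up_threshold0 leqNgt b_lt.
Qed.

End FirstStep.

Local Open Scope ring_scope.

Lemma sum_ord_threshold (V : nmodType) (m t : nat) (u v : V) : (t <= m)%N ->
  \sum_(b < m) (if (b < t)%N then u else v) = u *+ t + v *+ (m - t).
Proof.
move=> t_le_m.
rewrite -(big_mkord xpredT (fun b => if (b < t)%N then u else v)).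
rewrite (big_cat_nat (leq0n t) t_le_m) /=.
rewrite (eq_big_nat _ _ (F2 := fun=> u)); last by move=> b /andP[_ ->].
rewrite (eq_big_nat _ _ (F2 := fun=> v) (m := t)); last first.
  by move=> b /andP[t_le_b _]; rewrite ltnNge t_le_b.
by rewrite !sumr_const_nat subn0.
Qed.

Section WalkLaw.
Variable R : realFieldType.

Lemma walk_law_mul_nwalks n x s :
  walk_law R n x s * (nwalks n x)%:R = (s \in walks n x)%:R.
Proof.
rewrite /walk_law size_walks; case: (_ \in _); last by rewrite mul0r.
by rewrite mulVf // pnatr_eq0 -lt0n nwalks_gt0.
Qed.

Lemma walk_law_mul_nwalks_shift n x s :
  walk_law R n x.-1 s * (nwalks_shift n x)%:R =
  ((0 < x)%N && (s \in walks n x.-1))%:R.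
Proof. by case: x => [|x]; rewrite ?mulr0 // walk_law_mul_nwalks. Qed.

Lemma sum_first_step_law n x s :
  \sum_(b < step_range n) walk_law R n (first_step n b x) s =
  (step_range n)%:R * walk_law R n.+1 x (x :: s).
Proof.
under eq_bigr do rewrite /first_step (fun_if (walk_law R n ^~ s)).
rewrite sum_ord_threshold; last exact: up_threshold_le.
have N_neq0 : (nwalks n.+1 x)%:R != 0 :> R.
  by rewrite pnatr_eq0 -lt0n nwalks_gt0.
apply: (mulIf N_neq0).
rewrite -[walk_law _ _ x.+1 s *+ _]mulr_natr.
rewrite -[walk_law _ _ x.-1 s *+ _]mulr_natr.
rewrite mulrDl -!mulrA -!natrM up_thresholdE down_thresholdE !natrM.
rewrite !(mulrCA _ (step_range n)%:R) -mulrDr; congr (_ * _).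
rewrite walk_law_mul_nwalks walk_law_mul_nwalks_shift walk_law_mul_nwalks.
rewrite mem_walksS.
case: (boolP (s \in walks n x.+1)) => [s_up | _]; last by rewrite add0r.
case: (boolP (_ && _)) => [/andP[x_gt0 /head_walks] | _]; last by rewrite addr0.
(* a walk cannot start both at x.+1 and at x.-1 *)
by move/head_walks: s_up => ->; lia.
Qed.

End WalkLaw.

Definition adjacent_coupling (R : realFieldType) (n : nat) (Om : finType)
    (p : Om -> R) (S : Om -> nat -> seq nat) :=
  [/\ forall w, 0 <= p w, \sum_w p w = 1,
      forall x s, \sum_(w | S w x == s) p w = walk_law R n x s &
      forall w x k, (k <= n)%N ->
        `|nth 0%N (S w x.+1) k - nth 0%N (S w x) k|%N = 1%N].

Lemma adjacent_coupling0 (R : realFieldType) :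
  adjacent_coupling 0 (fun _ : 'I_1 => 1 : R) (fun _ x => [:: x]).
Proof.
split=> [w | | x s | w x k]; rewrite ?big_ord1 ?ler01 //.
- rewrite big_mkcond big_ord1 /walk_law inE eq_sym.
  by case: (_ == _); rewrite ?invr1.
- by rewrite leqn0 => /eqP ->; rewrite distSn.
Qed.

Section Extension.
Variables (R : realFieldType) (n : nat) (Om : finType).
Variables (p : Om -> R) (S : Om -> nat -> seq nat).
Hypothesis coupling : adjacent_coupling n p S.

Let M := step_range n.

Definition extend_prob (w : (Om * 'I_M)%type) := p w.1 / M%:R.

Definition extend_walks (w : (Om * 'I_M)%type) x :=
  x :: S w.1 (first_step n w.2 x).

Lemma adjacent_coupling_extend :
  adjacent_coupling n.+1 extend_prob extend_walks.
Proof.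
have [p_ge0 p_sum1 p_marginal S_adjacent] := coupling.
have M_neq0 : M%:R != 0 :> R by rewrite pnatr_eq0 -lt0n step_range_gt0.
have sum_pair (F : (Om * 'I_M)%type -> R) : \sum_w F w = \sum_b \sum_a F (a, b).
  by rewrite exchange_big pair_big; apply: eq_bigr => -[].
split=> [w | | x s | [a b] x [|k] k_le_n].
- by rewrite divr_ge0 ?ler0n.
- rewrite sum_pair (eq_bigr (fun=> M%:R^-1)) => [|b _]; last first.
    by rewrite -mulr_suml p_sum1 mul1r.
  by rewrite sumr_const card_ord -[_^-1 *+ M]mulr_natl mulfV.
- rewrite big_mkcond sum_pair /extend_walks /extend_prob /=.
  have [-> | s_not_cons] := eqVneq s (x :: behead s).
    under eq_bigr => b _.
      rewrite (eq_bigr (fun a => if S a (first_step n b x) == behead s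
                                 then p a / M%:R else 0)) => [|a _].
        by rewrite -big_mkcond -mulr_suml p_marginal; over.
      by rewrite eqseq_cons eqxx.
    by rewrite -mulr_suml sum_first_step_law mulrC mulKf.
  rewrite /walk_law ifF; last by apply: contraNF s_not_cons => /walksS_cons ->.
  rewrite big1 // => b _; rewrite big1 // => a _; rewrite ifF //.
  by apply: contraNF s_not_cons => /eqP <-.
- by rewrite distSn.
- rewrite /extend_walks /=.
  have [-> | [-> ->]] := first_step_adjacent x (ltn_ord b).
    exact: S_adjacent.
  by rewrite distnC S_adjacent.
Qed.

End Extension.

Lemma exists_adjacent_coupling (R : realFieldType) n :
  exists (Om : finType) (p : Om -> R) (S : Om -> nat -> seq nat),
    adjacent_coupling n p S.
Proof.
elim: n => [|n [Om [p [S coupling]]]].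
  by exists 'I_1, (fun => 1), (fun _ x => [:: x]); apply: adjacent_coupling0.
exists _, (extend_prob (n := n) p), (extend_walks S).
exact: adjacent_coupling_extend.
Qed.

Lemma dist_le_of_unit_steps (f : nat -> nat) :
  (forall x, `|f x.+1 - f x| <= 1)%N ->
  forall x y, (`|f x - f y| <= `|x - y|)%N.
Proof.
move=> f_steps.
have dist_shift x d : (`|f (x + d) - f x| <= d)%N.
  elim: d => [|d IHd]; first by rewrite addn0 distnn.
  apply: leq_trans (leqD_dist _ (f (x + d)) _) _.
  by rewrite addnS -[d.+1]add1n leq_add.
move=> x y; wlog x_le_y : x y / (x <= y)%N => [sym|].
  by case: (leqP x y) => [/sym // | /ltnW/sym]; rewrite distnC (distnC x).
by rewrite distnC (distnEr x_le_y) -{1}(subnKC x_le_y) dist_shift.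
Qed.

Theorem propositionA5 (R : realFieldType) (n : nat) :
  exists (Omega : finType) (p : Omega -> R) (S : Omega -> nat -> seq nat),
    [/\ (forall w, 0 <= p w),
        \sum_(w : Omega) p w = 1,
        (forall (x : nat) (s : seq nat),
            \sum_(w : Omega | S w x == s) p w = walk_law R n x s),
        (forall w, 0 < p w -> forall (x k : nat), (k <= n)%N ->
            `|nth 0%N (S w x.+1) k - nth 0%N (S w x) k|%N = 1%N) &
        (forall w, 0 < p w -> forall (x y k : nat), (k <= n)%N ->
            (`|nth 0%N (S w x) k - nth 0%N (S w y) k|%N <= `|x - y|%N)%N)].
Proof.
have [Om [p [S [p_ge0 p_sum1 p_marginal S_adjacent]]]] :=
  exists_adjacent_coupling R n.
exists Om, p, S; split=> // w _ => [x k | x y k k_le_n].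
  exact: S_adjacent.
apply: (dist_le_of_unit_steps (f := fun x => nth 0%N (S w x) k)) => z.
by rewrite S_adjacent.
Qed.
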